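(* Let $D=\mathrm{diag}(d_1,\dots,d_n)$ be real diagonal, $\beta_1,\beta_2\neq0$ real, $\mathbf v_1,\mathbf v_2\in\mathbb R^n$ with entries $v_{1q},v_{2q}$, and $M=D+\beta_1\mathbf v_1\mathbf v_1^T+\beta_2\mathbf v_2\mathbf v_2^T$. Fix an index $i$ such that $d_j\neq d_i$ for all $j\neq i$, and suppose $v_{1i}=0$ and $v_{2i}\neq0$. Define $f_{11}(\lambda)=1-\beta_1\sum_{q\neq i}\frac{v_{1q}^2}{\lambda-d_q}$. Then $d_i$ is an eigenvalue of $M$ if and only if $f_{11}(d_i)=0$; in that case the eigenspace is spanned by the vector $\mathbf x$ with $x_q=\frac{v_{1q}}{d_q-d_i}$ for $q\neq i$ and $x_i$ determined by $\mathbf v_2^T\mathbf x=0$, i.e. $x_i=-\frac1{v_{2i}}\sum_{q\ne i}v_{2q}x_q$. Symmetrically, if $v_{1i}\neq0$ and $v_{2i}=0$, then $d_i$ is an eigenvalue of $M$ iff $f_{12}(d_i)=0$, where $f_{12}(\lambda)=1-\beta_2\sum_{q\neq i}\frac{v_{2q}^2}{\lambda-d_q}$. *)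

From HB Require Import structures.
From mathcomp Require Import all_boot all_order all_algebra.
Set Implicit Arguments. Unset Strict Implicit. Unset Printing Implicit Defensive.
Import Order.TTheory GRing.Theory Num.Theory.
Local Open Scope ring_scope.

(* Vectors are row vectors 'rV_n; the diagonal of D is d : 'rV_n (d_q = d 0 q). *)

Definition rank2_mod {R : realFieldType} {n : nat} (d : 'rV[R]_n) (b1 b2 : R)
  (v1 v2 : 'rV[R]_n) : 'M[R]_n :=
  diag_mx d + b1 *: (v1^T *m v1) + b2 *: (v2^T *m v2).

Definition secular {R : realFieldType} {n : nat} (d : 'rV[R]_n) (b : R)
  (v : 'rV[R]_n) (i : 'I_n) (lam : R) : R :=
  1 - b * \sum_(q < n | q != i) (v 0 q) ^+ 2 / (lam - d 0 q).

Definition eigvec {R : realFieldType} {n : nat} (d : 'rV[R]_n)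
  (v1 v2 : 'rV[R]_n) (i : 'I_n) : 'rV[R]_n :=
  \row_(q < n)
    if q == i then
      - (v2 0 i)^-1 * \sum_(p < n | p != i) v2 0 p * (v1 0 p / (d 0 p - d 0 i))
    else v1 0 q / (d 0 q - d 0 i).

From HB Require Import structures.
From mathcomp Require Import all_boot all_order all_algebra.
From mathcomp Require Import ring lra.
Import Order.TTheory GRing.Theory Num.Theory.
Local Open Scope ring_scope.

(* Take a row x with x M = d_i x.  Since v1_i = 0, the i-th coordinate of this
   equation reads b2 (x . v2) v2_i = 0, so x . v2 = 0 and the v2-term drops out.
   The remaining coordinates then give x_q = b1 (x . v1) v1_q / (d_i - d_q) for
   q <> i, so x is a multiple of eigvec, and dotting with v1 yields
   (x . v1) f11(d_i) = 0.  Conversely, when f11(d_i) = 0 the vector eigvec has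
   eigvec . v2 = 0 by the choice of its i-th entry and eigvec . v1 = -1/b1, which
   makes it an eigenvector.  The second case follows by exchanging the two
   rank-one terms. *)

Definition rdot {R : pzRingType} {n : nat} (x v : 'rV[R]_n) : R :=
  \sum_k x 0 k * v 0 k.

Lemma rank2_modC (R : realFieldType) (n : nat) (d : 'rV[R]_n) (b1 b2 : R)
  (v1 v2 : 'rV[R]_n) :
  rank2_mod d b1 b2 v1 v2 = rank2_mod d b2 b1 v2 v1.
Proof. by rewrite /rank2_mod addrAC. Qed.

Lemma mulmx_rank2_mod {R : realFieldType} {n : nat} (d : 'rV[R]_n)
  (b1 b2 : R) (v1 v2 x : 'rV[R]_n) j :
  (x *m rank2_mod d b1 b2 v1 v2) 0 j =
  x 0 j * d 0 j + b1 * rdot x v1 * v1 0 j + b2 * rdot x v2 * v2 0 j.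
Proof.
rewrite /rank2_mod !mulmxDr -!scalemxAr !mulmxA mul_mx_diag !mxE !big_ord1 !mxE.
rewrite /rdot; congr (_ + _ + _); rewrite mulrA; congr (_ * _ * _);
by apply: eq_bigr => k _; rewrite !mxE.
Qed.

Section IsolatedEigenvalue.
Context {R : realFieldType} {n : nat} {d : 'rV[R]_n} {b1 b2 : R}
  {v1 v2 : 'rV[R]_n} {i : 'I_n}.
Hypotheses (hb1 : b1 != 0) (hb2 : b2 != 0)
  (hd : forall j : 'I_n, j != i -> d 0 j != d 0 i)
  (hv1 : v1 0 i = 0) (hv2 : v2 0 i != 0).

Let M := rank2_mod d b1 b2 v1 v2.
Let f11 := secular d b1 v1 i (d 0 i).

Lemma subr_diag_neq0 {q : 'I_n} : q != i -> d 0 q - d 0 i != 0.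
Proof. by move=> nq; rewrite subr_eq0 hd. Qed.

Lemma rdot_v1E (x : 'rV[R]_n) :
  rdot x v1 = \sum_(k < n | k != i) x 0 k * v1 0 k.
Proof. by rewrite /rdot (bigD1 i) //= hv1 mulr0 add0r. Qed.

Section EigenRow.
Context {x : 'rV[R]_n}.
Hypothesis hx : x *m M = d 0 i *: x.

Lemma eigen_rdot_v2 : rdot x v2 = 0.
Proof.
have /eqP := mulmx_rank2_mod d b1 b2 v1 v2 x i.
rewrite -/M hx mxE hv1 mulr0 addr0 mulrC eq_sym -subr_eq0 addrC addKr.
by rewrite !mulf_eq0 (negbTE hb2) (negbTE hv2) orbF => /eqP.
Qed.

Lemma eigen_coord q : q != i ->
  x 0 q = - (b1 * rdot x v1) * (v1 0 q / (d 0 q - d 0 i)).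
Proof.
move=> nq; have dq := subr_diag_neq0 nq.
have := mulmx_rank2_mod d b1 b2 v1 v2 x q.
rewrite -/M hx mxE eigen_rdot_v2 mulr0 mul0r addr0 => Eq.
apply: (mulIf dq); rewrite mulrA mulfVK //; lra.
Qed.

Lemma eigen_eq_eigvec : x = - (b1 * rdot x v1) *: eigvec d v1 v2 i.
Proof.
apply/rowP => q; rewrite !mxE; case: eqP => [->|/eqP nq]; last exact: eigen_coord.
have := eigen_rdot_v2; rewrite {1}/rdot (bigD1 i) //=.
rewrite (eq_bigr (fun k => - (b1 * rdot x v1) * (v2 0 k * (v1 0 k / (d 0 k - d 0 i)))));
  last by move=> k nk; rewrite eigen_coord // -mulrA (mulrC (v2 0 k)).
rewrite -mulr_sumr; set c := - (b1 * rdot x v1); set T := \sum_(_ < n | _) _.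
move=> E; apply: (mulIf hv2).
have -> : c * (- (v2 0 i)^-1 * T) * v2 0 i = - (c * T) by move: hv2 => h; field.
lra.
Qed.

Lemma eigen_rdot_secular : rdot x v1 * f11 = 0.
Proof.
rewrite /f11 /secular mulrBr mulr1 {1}rdot_v1E mulr_sumr mulr_sumr -sumrB.
apply: big1 => k nk; have dk := subr_diag_neq0 nk.
have dk' : d 0 i - d 0 k != 0 by rewrite subr_eq0 eq_sym hd.
by rewrite eigen_coord //; field; rewrite dk dk'.
Qed.

End EigenRow.

Lemma rdot_eigvec_v2 : rdot (eigvec d v1 v2 i) v2 = 0.
Proof.
rewrite /rdot (bigD1 i) //= mxE eqxx.
rewrite [X in _ + X](eq_bigr (fun p => v2 0 p * (v1 0 p / (d 0 p - d 0 i)))) => [|k nk].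
  by move: hv2 => h; field.
by rewrite mxE (negbTE nk) mulrC.
Qed.

Lemma rdot_eigvec_v1 : f11 = 0 -> rdot (eigvec d v1 v2 i) v1 = - b1^-1.
Proof.
move=> /eqP; rewrite /f11 /secular subr_eq0 eq_sym => /eqP f0.
apply: (mulfI hb1); rewrite mulrN mulfV // -f0 -mulrN -sumrN rdot_v1E.
congr (_ * _); apply: eq_bigr => k nk; have dk := subr_diag_neq0 nk.
have dk' : d 0 i - d 0 k != 0 by rewrite subr_eq0 eq_sym hd.
by rewrite mxE (negbTE nk); field; rewrite dk dk'.
Qed.

Lemma eigvec_eigen : f11 = 0 ->
  eigvec d v1 v2 i *m M = d 0 i *: eigvec d v1 v2 i.
Proof.
move=> f0; apply/rowP => j.
rewrite mulmx_rank2_mod rdot_eigvec_v1 // rdot_eigvec_v2 [RHS]mxE.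
have [->|nj] := eqVneq j i; first by rewrite hv1; ring.
have dj := subr_diag_neq0 nj.
by rewrite !mxE (negbTE nj); field; rewrite dj hb1.
Qed.

Lemma eigvec_neq0 : f11 = 0 -> eigvec d v1 v2 i != 0.
Proof.
move=> /rdot_eigvec_v1 + ; apply: contra_eqN => /eqP ->.
rewrite /rdot big1 => [|k _]; last by rewrite mxE mul0r.
by rewrite eq_sym oppr_eq0 invr_eq0.
Qed.

Lemma eigenvalue_isolated : eigenvalue M (d 0 i) <-> f11 = 0.
Proof.
split.
- case/eigenvalueP => x hx; apply: contraNeq => f_neq0.
  have /eqP := eigen_rdot_secular hx; rewrite mulf_eq0 (negbTE f_neq0) orbF.
  by move=> /eqP s0; rewrite (eigen_eq_eigvec hx) s0 mulr0 oppr0 scale0r.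
- move=> f0; apply/eigenvalueP; exists (eigvec d v1 v2 i).
    exact: eigvec_eigen.
  exact: eigvec_neq0.
Qed.

Lemma eigenspace_isolated : f11 = 0 ->
  (eigenspace M (d 0 i) :=: eigvec d v1 v2 i)%MS.
Proof.
move=> f0; apply/eqmxP/andP; split; last exact/eigenspaceP/eigvec_eigen.
apply/row_subP => k; have /eigenspaceP hk := row_sub k (eigenspace M (d 0 i)).
by rewrite (eigen_eq_eigvec hk) scalemx_sub.
Qed.

End IsolatedEigenvalue.

Theorem mainTheorem3 (R : realFieldType) (n : nat) (d : 'rV[R]_n) (b1 b2 : R)
  (v1 v2 : 'rV[R]_n) (i : 'I_n)
  (hb1 : b1 != 0) (hb2 : b2 != 0)
  (hd : forall j : 'I_n, j != i -> d 0 j != d 0 i) :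
  (v1 0 i = 0 -> v2 0 i != 0 ->
     (eigenvalue (rank2_mod d b1 b2 v1 v2) (d 0 i) <-> secular d b1 v1 i (d 0 i) = 0)
     /\ (secular d b1 v1 i (d 0 i) = 0 ->
           (eigenspace (rank2_mod d b1 b2 v1 v2) (d 0 i) :=: eigvec d v1 v2 i)%MS))
  /\
  (v1 0 i != 0 -> v2 0 i = 0 ->
     (eigenvalue (rank2_mod d b1 b2 v1 v2) (d 0 i) <-> secular d b2 v2 i (d 0 i) = 0)).
Proof.
split=> hv1 hv2.
  exact: conj (eigenvalue_isolated hb1 hb2 hd hv1 hv2)
              (eigenspace_isolated hb1 hb2 hd hv1 hv2).
by rewrite rank2_modC; exact: eigenvalue_isolated hb2 hb1 hd hv2 hv1.
Qed.
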